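(* Let $p$ be an odd prime and let $\mathcal T(\mathbf a)$, $\mathbf a=(a_1,\dots,a_k)$ with $k\ge 4$ and $\gcd(a_1,\dots,a_k)=1$, be a regular triangular form which is $p$-unstable. Then $\lambda_p(\mathcal T(\mathbf a))$ is also regular.
   Context: For positive integers $c_1,\dots,c_k$, $\mathcal T(c_1,\dots,c_k)=\sum c_i\,x_i(x_i+1)/2$. A nonnegative integer $n$ is represented if the equation $\mathcal T(\mathbf c)=n$ has a solution in $\mathbb Z^k$, and locally represented if it has a solution in $\mathbb Z_q^k$ for every prime $q$; the form is regular if it represents every positive integer it locally represents. For an odd prime $p$, $\overline{DQ_p(\mathbf c)}=\{\gamma\in\mathbb Z_p:\gamma=\sum c_iy_i^2,\ y_i\in\mathbb Z_p\}$, and $\mathcal T(\mathbf c)$ is $p$-unstable if $\overline{DQ_p(\mathbf c)}\ne\mathbb Z_p$. For primitive $\mathbf a=(a_1,\dots,a_k)$ and odd prime $p$, let $s_i=0$ if $p\mid a_i$ and $s_i=2$ otherwise, let $s=\min_i \mathrm{ord}_p(p^{s_i}a_i)\in\{1,2\}$, and define $\lambda_p(\mathcal T(\mathbf a))=\mathcal T(p^{s_1-s}a_1,\dots,p^{s_k-s}a_k)$. *)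

From mathcomp Require Import all_boot all_order all_algebra.
Set Implicit Arguments. Unset Strict Implicit. Unset Printing Implicit Defensive.
Import Order.TTheory GRing.Theory Num.Theory.
Local Open Scope ring_scope.

(* q-adic integers Z_q, realised as the inverse limit of Z/q^e Z:
   a coherent sequence of integer representatives, s (e+1) = s e mod q^e.
   Two such sequences denote the same q-adic integer iff they agree mod q^e
   for every e; equalities in Z_q are therefore stated level-wise. *)
Record padic (q : nat) := Padic {
  pseq : nat -> int;
  pseq_coh : forall e : nat, (pseq e.+1 = pseq e %[mod (q ^ e)%N%:Z])%Z }.

Definition tri (x : int) : int := ((x * (x + 1)) %/ 2)%Z.

Definition triform (k : nat) (c : 'I_k -> nat) (x : 'I_k -> int) : int :=
  \sum_(i < k) (c i)%:Z * tri (x i).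

Definition represented (k : nat) (c : 'I_k -> nat) (n : nat) : Prop :=
  exists x : 'I_k -> int, triform c x = n%:Z.

(* n is represented by T(c) over Z_q.  Since 2 is a non-zero-divisor in the
   domain Z_q, T(c)(x) = n in Z_q iff sum_i c_i x_i (x_i+1) = 2n in Z_q,
   which is stated level-wise modulo q^e. *)
Definition locally_represented_at (k : nat) (c : 'I_k -> nat) (n q : nat) : Prop :=
  exists x : 'I_k -> padic q, forall e : nat,
    (\sum_(i < k) (c i)%:Z * (pseq (x i) e * (pseq (x i) e + 1))
       = (2 * n)%N%:Z %[mod (q ^ e)%N%:Z])%Z.

Definition locally_represented (k : nat) (c : 'I_k -> nat) (n : nat) : Prop :=
  forall q : nat, prime q -> locally_represented_at c n q.

Definition regular (k : nat) (c : 'I_k -> nat) : Prop :=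
  forall n : nat, (0 < n)%N -> locally_represented c n -> represented c n.

Definition in_DQ (p k : nat) (c : 'I_k -> nat) (g : padic p) : Prop :=
  exists y : 'I_k -> padic p, forall e : nat,
    (pseq g e = \sum_(i < k) (c i)%:Z * (pseq (y i) e) ^+ 2 %[mod (p ^ e)%N%:Z])%Z.

Definition p_unstable (p k : nat) (c : 'I_k -> nat) : Prop :=
  exists g : padic p, ~ in_DQ c g.

Definition lam_s (p k : nat) (a : 'I_k -> nat) (i : 'I_k) : nat :=
  if (p %| a i)%N then 0%N else 2%N.

(* s = min_i ord_p(p^{s_i} a_i); the initial value 2 of the fold is harmless
   since ord_p(p^{s_i} a_i) = 2 whenever p does not divide a_i, and for
   primitive a (k >= 1) some a_i is prime to p. *)
Definition lam_smin (p k : nat) (a : 'I_k -> nat) : nat :=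
  \big[minn/2%N]_(i < k) logn p (p ^ lam_s p a i * a i).

Definition lambda_coef (p k : nat) (a : 'I_k -> nat) : 'I_k -> nat :=
  fun i => ((p ^ lam_s p a i * a i) %/ p ^ lam_smin p a)%N.

From mathcomp Require Import all_boot all_order all_algebra.
From mathcomp Require Import ring zify.
Import Order.TTheory GRing.Theory Num.Theory.

(** Write [h = (p-1)/2] and [P = p^s].  The substitution [y = p x + h] on the
    coordinates whose coefficient is prime to [p] gives
    [T(a)(y) = P * T(lambda(a))(x) + c] for a constant [c], and it preserves
    representability over every [Z_q]; so a positive [n] locally represented
    by [lambda(a)] yields [P n + c] locally, hence globally, represented by
    [T(a)].  To descend a global solution [y] back to [x] one needs
    [y_i = h (mod p)], i.e. [p | 2 y_i + 1], whenever [p] does not divide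
    [a_i].  This is where [p]-instability enters: [p | sum a_i (2 y_i + 1)^2],
    and if a zero of [sum a_i z_i^2] modulo [p] had a unit coordinate with a
    unit coefficient, Hensel's lemma would make [sum a_i y_i^2] cover all
    of [Z_p]. *)

Local Open Scope ring_scope.

Lemma eqz_mod_dvdP (d m n : int) : (m = n %[mod d])%Z <-> (d %| m - n)%Z.
Proof. by rewrite -eqz_mod_dvd; split=> [->|/eqP]. Qed.

Lemma tri_mul2 (x : int) : 2 * tri x = x * (x + 1).
Proof.
rewrite /tri mulrC divzK //.
have := divz_eq x 2; set q := (x %/ 2)%Z; set r := (x %% 2)%Z => ->.
have [-> | ->] : r = 0 \/ r = 1.
  have r_ge0 : 0 <= r by apply: modz_ge0.
  have r_lt2 : r < 2 by apply: ltz_pmod.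
  lia.
- have -> : (q * 2 + 0) * (q * 2 + 0 + 1) = q * (q * 2 + 1) * 2 by ring.
  exact: dvdz_mull.
- have -> : (q * 2 + 1) * (q * 2 + 1 + 1) = (q * 2 + 1) * (q + 1) * 2 by ring.
  exact: dvdz_mull.
Qed.

Lemma triform_mul2 k (c : 'I_k -> nat) (x : 'I_k -> int) :
  2 * triform c x = \sum_(i < k) (c i)%:Z * (x i * (x i + 1)).
Proof.
by rewrite /triform mulr_sumr; apply: eq_bigr => i _; rewrite -tri_mul2; ring.
Qed.

Lemma sum_sqr_shift_delta (R : comPzRingType) k (a z : 'I_k -> R) (j : 'I_k) (c : R) :
  \sum_(i < k) a i * (c * z i + (i == j)%:R) ^+ 2 =
  c ^+ 2 * (\sum_(i < k) a i * z i ^+ 2) + c * (2 * a j * z j) + a j.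
Proof.
rewrite (eq_bigr (fun i =>
    c ^+ 2 * (a i * z i ^+ 2) + (i == j)%:R * (a i * (2 * c * z i + 1)))); last first.
  by move=> i _; case: (i == j) => /=; ring.
have delta_sum (f : 'I_k -> R) : \sum_(i < k) (i == j)%:R * f i = f j.
  rewrite (bigD1 j) //= eqxx mul1r big1 ?addr0 // => i /negbTE ->.
  by rewrite mul0r.
by rewrite big_split /= -mulr_sumr delta_sum; ring.
Qed.

Section QuadraticHensel.

Variables (p : nat) (Q B A d : int).
Hypotheses (p_gt0 : (0 < p)%N) (p_dvd_Q : (p%:Z %| Q)%Z)
  (Bd_eq1 : (p%:Z %| B * d - 1)%Z).

Let F (c : int) := c ^+ 2 * Q + c * B + A.

(* [d] is an inverse of [F' = B] modulo [p], so each step is a Newton step. *)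
Fixpoint hensel_seq (g : nat -> int) (e : nat) : int :=
  if e is e'.+1 then
    let c := hensel_seq g e' in
    c + (p ^ e')%N%:Z * (((g e - F c) %/ (p ^ e')%N%:Z)%Z * d)
  else 0.

Lemma hensel_seq_coh g e :
  ((p ^ e)%N%:Z %| hensel_seq g e.+1 - hensel_seq g e)%Z.
Proof. by rewrite /= addrC addKr dvdz_mulr. Qed.

Lemma hensel_seq_root g :
  (forall e, ((p ^ e)%N%:Z %| g e.+1 - g e)%Z) ->
  forall e, ((p ^ e)%N%:Z %| F (hensel_seq g e) - g e)%Z.
Proof.
move=> g_coh; elim=> [|e IH]; first by rewrite expn0 dvd1z.
rewrite /=; set m := (p ^ e)%N%:Z; set c := hensel_seq g e.
have m_dvd_M : (m %| g e.+1 - F c)%Z.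
  have -> : g e.+1 - F c = (g e.+1 - g e) - (F c - g e) by ring.
  by rewrite rpredB.
set M := g e.+1 - F c in m_dvd_M *; set t := (M %/ m)%Z.
have M_eq : M = t * m by rewrite divzK.
have m_neq0 : m != 0 by rewrite /m eqz_nat expn_eq0 negb_and -lt0n p_gt0.
have -> : F (c + m * (t * d)) - g e.+1 =
    m * (t * (B * d - 1) + 2 * c * Q * (t * d) + m * (t * d) ^+ 2 * Q).
  have -> : g e.+1 = F c + M by rewrite /M addrC subrK.
  by rewrite /F M_eq; ring.
rewrite expnS PoszM (mulrC p%:Z) -/m dvdz_mul2l //.
by rewrite !rpredD ?(dvdz_mull _ Bd_eq1) ?(dvdz_mull _ p_dvd_Q) // dvdz_mulr // dvdz_mull.
Qed.

End QuadraticHensel.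

Lemma in_DQ_of_isotropic {p k} {a : 'I_k -> nat} {z : 'I_k -> int} {j : 'I_k} :
  prime p -> odd p ->
  (p%:Z %| \sum_(i < k) (a i)%:Z * z i ^+ 2)%Z ->
  ~~ (p %| a j)%N -> ~~ (p%:Z %| z j)%Z ->
  forall g : padic p, in_DQ a g.
Proof.
move=> p_pr p_odd p_dvd_Q p_ndvd_a p_ndvd_z g.
set Q := \sum_(i < k) _ in p_dvd_Q; set B := 2 * (a j)%:Z * z j.
have : coprimez p B.
  rewrite coprimezE /B !abszM /= !coprimeMr coprimen2 p_odd.
  by rewrite !prime_coprime // p_ndvd_a; exact: p_ndvd_z.
case/coprimezP=> [[u d] /= uBd].
have p_dvd_Bd : (p%:Z %| B * d - 1)%Z.
  have -> : B * d - 1 = - (u * p%:Z) by rewrite -uBd; ring.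
  by rewrite rpredN dvdz_mull.
have g_coh e := (eqz_mod_dvdP _ _ _).1 (pseq_coh g e).
pose c := hensel_seq p Q B (a j)%:Z d (pseq g).
have y_coh i e : (c e.+1 * z i + (i == j)%:R = c e * z i + (i == j)%:R
                   %[mod (p ^ e)%N%:Z])%Z.
  apply/eqz_mod_dvdP.
  have -> : c e.+1 * z i + (i == j)%:R - (c e * z i + (i == j)%:R) =
    (c e.+1 - c e) * z i by ring.
  exact/dvdz_mulr/hensel_seq_coh.
exists (fun i => Padic (y_coh i)) => e /=; apply/eqz_mod_dvdP.
rewrite sum_sqr_shift_delta -opprB rpredN.
exact: hensel_seq_root (prime_gt0 p_pr) p_dvd_Q p_dvd_Bd (pseq g) g_coh e.
Qed.

Lemma p_unstable_anisotropic {p k} {a : 'I_k -> nat} {z : 'I_k -> int} :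
  prime p -> odd p -> p_unstable p a ->
  (p%:Z %| \sum_(i < k) (a i)%:Z * z i ^+ 2)%Z ->
  forall i, ~~ (p %| a i)%N -> (p%:Z %| z i)%Z.
Proof.
move=> p_pr p_odd [g g_notin] p_dvd_Q i p_ndvd_a; apply/contraT => p_ndvd_z.
by exfalso; apply: g_notin; exact: (in_DQ_of_isotropic p_pr p_odd p_dvd_Q p_ndvd_a p_ndvd_z).
Qed.

Lemma sum_shift_tri (R : comPzRingType) k (unit : pred 'I_k) (p h P : R)
    (a b x : 'I_k -> R) :
  p = 2 * h + 1 ->
  (forall i, P * b i = (if unit i then p ^+ 2 * a i else a i)) ->
  let y i := if unit i then p * x i + h else x i in
  \sum_(i < k) a i * (y i * (y i + 1)) =
  P * \sum_(i < k) b i * (x i * (x i + 1)) +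
  h * (h + 1) * \sum_(i < k | unit i) a i.
Proof.
move=> -> Pb y; rewrite (big_mkcond unit) !mulr_sumr -big_split /=.
apply: eq_bigr => i _; rewrite [P * _]mulrA Pb /y; case: (unit i); ring.
Qed.

Section LambdaCoef.

Context {p k : nat} {a : 'I_k -> nat}.
Hypotheses (p_pr : prime p) (a_gt0 : forall i, (0 < a i)%N).

Lemma lam_smin_gt0 : (0 < lam_smin p a)%N.
Proof.
apply: (big_ind (fun x => 0 < x)%N) => // [x y x_gt0 y_gt0|i _].
  by rewrite leq_min x_gt0 y_gt0.
rewrite logn_gt0 mem_primes p_pr muln_gt0 expn_gt0 prime_gt0 ?a_gt0 //=.
rewrite /lam_s; case: ifP => [p_dvd_a|_]; first by rewrite mul1n.
by rewrite dvdn_mulr // expnS dvdn_mulr.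
Qed.

Lemma lambda_coefE i :
  (p ^ lam_smin p a * lambda_coef p a i)%N =
  if (p %| a i)%N then a i else (p ^ 2 * a i)%N.
Proof.
rewrite mulnC divnK.
  by rewrite /lam_s; case: ifP; rewrite ?mul1n.
rewrite pfactor_dvdn ?muln_gt0 ?expn_gt0 ?(prime_gt0 p_pr) ?a_gt0 //.
by have := bigmin_le 2%N i (fun j => logn p (p ^ lam_s p a j * a j)); rewrite minEnat.
Qed.

End LambdaCoef.

Section LambdaTransfer.

Context {p k : nat} {a : 'I_k -> nat}.
Hypotheses (p_pr : prime p) (p_odd : odd p) (a_gt0 : forall i, (0 < a i)%N).

Let unit i := ~~ (p %| a i)%N.
Let h := p./2.
Let P := (p ^ lam_smin p a)%N%:Z.
Let shift (x : int) := p%:Z * x + h%:Z.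

Lemma p_eq_2h1 : p%:Z = 2 * h%:Z + 1.
Proof. by have := odd_double_half p; rewrite p_odd -muln2 /h; lia. Qed.

Lemma lambda_coefZ i :
  P * (lambda_coef p a i)%:Z = if unit i then p%:Z ^+ 2 * (a i)%:Z else (a i)%:Z.
Proof.
rewrite /P -PoszM lambda_coefE // /unit.
by case: (p %| a i)%N; rewrite //= PoszM expr2 -PoszM.
Qed.

Definition lambda_target (n : nat) : nat :=
  (p ^ lam_smin p a * n + (h * (h + 1))./2 * \sum_(i < k | unit i) a i)%N.

Lemma lambda_targetZ n :
  (2 * lambda_target n)%N%:Z =
  P * (2 * n)%N%:Z + h%:Z * (h%:Z + 1) * \sum_(i < k | unit i) (a i)%:Z.
Proof.
have half : (2 * (h * (h + 1))./2 = h * (h + 1))%N.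
  have := odd_double_half (h * (h + 1)); rewrite oddM addn1 /= andbN add0n.
  by rewrite -muln2 mulnC.
rewrite /lambda_target mulnDr !mulnA half -(big_morph Posz PoszD (erefl 0%:Z)).
by rewrite /P !(PoszD, PoszM); ring.
Qed.

Lemma lambda_shift_sum (x : 'I_k -> int) :
  \sum_(i < k) (a i)%:Z * ((if unit i then shift (x i) else x i) *
                           ((if unit i then shift (x i) else x i) + 1)) =
  P * \sum_(i < k) (lambda_coef p a i)%:Z * (x i * (x i + 1)) +
  h%:Z * (h%:Z + 1) * \sum_(i < k | unit i) (a i)%:Z.
Proof. exact: sum_shift_tri p_eq_2h1 lambda_coefZ. Qed.

Lemma locally_represented_lambda_target n :
  locally_represented (lambda_coef p a) n -> locally_represented a (lambda_target n).
Proof.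
move=> n_loc q /n_loc [x x_rep].
pose y i e := if unit i then shift (pseq (x i) e) else pseq (x i) e.
have y_coh i e : (y i e.+1 = y i e %[mod (q ^ e)%N%:Z])%Z.
  apply/eqz_mod_dvdP; have := (eqz_mod_dvdP _ _ _).1 (pseq_coh (x i) e).
  rewrite /y /shift; case: (unit i) => // x_coh.
  by rewrite opprD addrACA subrr addr0 -mulrBr dvdz_mull.
exists (fun i => Padic (y_coh i)) => e /=; apply/eqz_mod_dvdP.
rewrite lambda_shift_sum lambda_targetZ opprD addrACA subrr addr0 -mulrBr.
exact/dvdz_mull/eqz_mod_dvdP/x_rep.
Qed.

Lemma lambda_target_gt0 n : (0 < n)%N -> (0 < lambda_target n)%N.
Proof. by move=> n_gt0; rewrite addn_gt0 muln_gt0 expn_gt0 prime_gt0 // n_gt0. Qed.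

Lemma unit_coord_shift {m : int} {y : 'I_k -> int} :
  p_unstable p a ->
  \sum_(i < k) (a i)%:Z * (y i * (y i + 1)) =
    P * m + h%:Z * (h%:Z + 1) * \sum_(i < k | unit i) (a i)%:Z ->
  forall i, unit i -> (p%:Z %| y i - h%:Z)%Z.
Proof.
move=> a_unstable; set SU := \sum_(i < k | unit i) _ => y_sum.
have p_dvd_P : (p%:Z %| P)%Z by rewrite dvdzE /= dvdn_exp // lam_smin_gt0.
(* [4 y (y + 1) + 1 = (2 y + 1)^2] and [4 h (h + 1) + 1 = p^2]. *)
have p_dvd_sq : (p%:Z %| \sum_(i < k) (a i)%:Z * (2 * y i + 1) ^+ 2)%Z.
  have -> : \sum_(i < k) (a i)%:Z * (2 * y i + 1) ^+ 2 =
      4 * \sum_(i < k) (a i)%:Z * (y i * (y i + 1)) + SU +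
      \sum_(i < k | ~~ unit i) (a i)%:Z.
    rewrite /SU mulr_sumr (big_mkcond unit) (big_mkcond (fun i => ~~ unit i)).
    rewrite -!big_split; apply: eq_bigr => i _ /=.
    by case: (unit i); rewrite /=; ring.
  rewrite y_sum.
  have -> : 4 * (P * m + h%:Z * (h%:Z + 1) * SU) + SU =
      P * (4 * m) + p%:Z * (p%:Z * SU) by rewrite p_eq_2h1; ring.
  rewrite !rpredD ?dvdz_mulr ?dvdz_mull //.
  by apply: rpred_sum => i /negPn p_dvd_a; rewrite dvdzE.
move=> i unit_i.
have p_dvd_2y1 := p_unstable_anisotropic p_pr p_odd a_unstable p_dvd_sq i unit_i.
have -> : y i - h%:Z = (h%:Z + 1) * ((2 * y i + 1) - p%:Z) - p%:Z * (y i - h%:Z).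
  by rewrite p_eq_2h1; ring.
by rewrite rpredB ?(dvdz_mull _ (rpredB p_dvd_2y1 _)) ?dvdz_mulr.
Qed.

Lemma represented_lambda_of_target n :
  p_unstable p a -> represented a (lambda_target n) ->
  represented (lambda_coef p a) n.
Proof.
move=> a_unstable [y y_rep].
have y_sum : \sum_(i < k) (a i)%:Z * (y i * (y i + 1)) =
    P * (2 * n)%N%:Z + h%:Z * (h%:Z + 1) * \sum_(i < k | unit i) (a i)%:Z.
  by rewrite -triform_mul2 y_rep -lambda_targetZ PoszM.
have y_shift := unit_coord_shift a_unstable y_sum.
pose x i := if unit i then ((y i - h%:Z) %/ p%:Z)%Z else y i.
have yE i : y i = if unit i then shift (x i) else x i.
  rewrite /x /shift; case unit_i: (unit i) => //.
  by rewrite mulrC divzK ?y_shift // subrK.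
have P_neq0 : P != 0 by rewrite /P eqz_nat expn_eq0 negb_and -lt0n prime_gt0.
have x_sum := lambda_shift_sum x.
rewrite (eq_bigr (fun i => (a i)%:Z * (y i * (y i + 1)))) in x_sum; last first.
  by move=> i _; rewrite -yE.
rewrite y_sum in x_sum; move/addIr/(mulfI P_neq0): x_sum => x_sum.
by exists x; apply: (@mulfI _ 2) => //; rewrite triform_mul2 -x_sum PoszM.
Qed.

End LambdaTransfer.

Theorem proposition3p6 (p k : nat) (a : 'I_k -> nat) :
  prime p -> odd p -> (4 <= k)%N ->
  (forall i, (0 < a i)%N) ->
  (\big[gcdn/0%N]_(i < k) a i = 1%N) ->
  regular a -> p_unstable p a ->
  regular (lambda_coef p a).
Proof.
move=> p_pr p_odd _ a_gt0 _ a_reg a_unstable n n_gt0 n_loc.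
apply: (represented_lambda_of_target p_pr p_odd a_gt0 n a_unstable).
apply: a_reg; first exact: lambda_target_gt0.
exact: (locally_represented_lambda_target p_pr p_odd a_gt0 n n_loc).
Qed.
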